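(* Let $G$ be a finite group with neutral element $e$, and let $A$ be a finitely-generated associative algebra over a commutative ring $R$ with unit, graded by $G$, i.e. $A=\bigoplus_{g\in G}A_g$ as $R$-modules with $A_gA_{g'}\subseteq A_{gg'}$ for all $g,g'\in G$. If the neutral component $A_e$ (which is a subalgebra of $A$) has a Shirshov base of height $h$, then $A$ has a Shirshov base of height strictly less than $(h+1)|G|$.
   Context: All algebras are associative (not necessarily unital) algebras over a commutative ring $R$ with unit. A finite subset $S$ of an algebra $B$ is called a Shirshov base of $B$ of height $h$ if $B$ is linearly spanned (over $R$) by the elements of the form $a_1^{k_1}a_2^{k_2}\cdots a_n^{k_n}$ with $n\le h$, $k_1,\dots,k_n$ positive integers, and $a_1,\dots,a_n\in S$. *)

From HB Require Import structures.
From mathcomp Require Import all_boot all_order all_algebra all_fingroup.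
Set Implicit Arguments. Unset Strict Implicit. Unset Printing Implicit Defensive.
Import GRing.Theory.
Local Open Scope ring_scope.

Definition is_assoc_algebra (R : comPzRingType) (A : lmodType R)
  (mul : A -> A -> A) : Prop :=
  [/\ associative mul,
      (forall a b c, mul (a + b) c = mul a c + mul b c),
      (forall a b c, mul a (b + c) = mul a b + mul a c),
      (forall (r : R) a b, mul (r *: a) b = r *: mul a b)
    & (forall (r : R) a b, mul a (r *: b) = r *: mul a b)].

Definition lin_span (R : comPzRingType) (A : lmodType R) (P : A -> Prop)
  (x : A) : Prop :=
  exists (n : nat) (c : 'I_n -> R) (v : 'I_n -> A),
    (forall i, P (v i)) /\ x = \sum_(i < n) c i *: v i.

(* positive power: npow mul a k = a^(k+1) (no unit needed) *)
Definition npow (A : Type) (mul : A -> A -> A) (a : A) (k : nat) : A :=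
  iter k (mul a) a.

Definition wprod (A : Type) (mul : A -> A -> A) (x : A) (s : seq A) : A :=
  foldl mul x s.

(* the elements a_1^{k_1} ... a_n^{k_n} with 1 <= n <= h, k_i >= 1, a_i in S *)
Definition shirshov_word (A : eqType) (mul : A -> A -> A) (S : seq A)
  (h : nat) (w : A) : Prop :=
  exists (a : A) (k : nat) (rest : seq (A * nat)),
    [/\ a \in S, all (fun p => p.1 \in S) rest, ((size rest).+1 <= h)%N
      & w = wprod mul (npow mul a k) [seq npow mul p.1 p.2 | p <- rest]].

Definition shirshov_base (R : comPzRingType) (A : lmodType R)
  (mul : A -> A -> A) (B : A -> Prop) (S : seq A) (h : nat) : Prop :=
  (forall s, s \in S -> B s) /\
  (forall x, B x <-> lin_span (shirshov_word mul S h) x).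

Definition fin_gen_algebra (R : comPzRingType) (A : lmodType R)
  (mul : A -> A -> A) : Prop :=
  exists gens : seq A, forall x : A,
    lin_span (fun w => exists (x0 : A) (s : seq A),
                 x0 \in gens /\ all (mem gens) s /\ w = wprod mul x0 s) x.

Definition is_submodule (R : comPzRingType) (A : lmodType R) (P : A -> Prop) :=
  [/\ P 0, (forall a b, P a -> P b -> P (a + b))
    & (forall (r : R) a, P a -> P (r *: a))].

Definition is_G_grading (R : comPzRingType) (A : lmodType R)
  (mul : A -> A -> A) (gT : finGroupType) (Ag : gT -> A -> Prop) : Prop :=
  [/\ (forall g, is_submodule (Ag g)),
      (forall x : A, exists! f : {ffun gT -> A},
          (forall g, Ag g (f g)) /\ x = \sum_(g : gT) f g)
    & (forall g g' a b, Ag g a -> Ag g' b -> Ag (g * g')%g (mul a b))].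

From HB Require Import structures.
From mathcomp Require Import all_boot all_order all_algebra all_fingroup.
From mathcomp Require Import zify.
Set Implicit Arguments. Unset Strict Implicit. Unset Printing Implicit Defensive.
Local Open Scope ring_scope.
Import GRing.Theory.

(* Decompose the finitely many generators of A into homogeneous components
   and let S be a Shirshov base S0 of A_e together with these components
   ("homogeneous letters").  A is spanned by products of homogeneous letters,
   so it suffices to bound the Shirshov height of such a product w.
   Read w from left to right and record the degrees of its prefixes; these
   lie in a set X of group elements containing e.  Cutting w after its last
   prefix of degree e gives w = w1 w2 with w1 in A_e (height <= h) and
   w2 = y Q, where the prefix degrees of Q lie in a translate of X \ {e},
   a set with one element fewer.  Induction on #|X| thus bounds the height by
   #|X| (h + 1) - 1 <= #|G| (h + 1) - 1. *)

Section Span.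
Variables (R : comPzRingType) (A : lmodType R).

(* The R-linear span of a predicate, as an inductive closure; it is
   equivalent to [lin_span] but far easier to reason with. *)
Inductive span (P : A -> Prop) : A -> Prop :=
| span0 : span P 0
| spanP x : P x -> span P x
| spanD x y : span P x -> span P y -> span P (x + y)
| spanZ (r : R) x : span P x -> span P (r *: x).

Lemma lin_span_span (P : A -> Prop) x : lin_span P x -> span P x.
Proof.
case=> n [c [v [Pv ->]]].
apply: (big_ind (span P)); [exact: span0 | exact: spanD |].
by move=> i _; apply/spanZ/spanP.
Qed.

Lemma span_lin_span (P : A -> Prop) x : span P x -> lin_span P x.
Proof.
elim=> [| y Py | y z _ [n1 [c1 [v1 [P1 ->]]]] _ [n2 [c2 [v2 [P2 ->]]]]
         | r y _ [n [c [v [Pv ->]]]]].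
- by exists 0%N, (fun _ => 0), (fun _ => 0); split; [case | rewrite big_ord0].
- exists 1%N, (fun _ => 1), (fun _ => y); split => //.
  by rewrite big_ord1 scale1r.
- pose pick (T : Type) (f1 : 'I_n1 -> T) (f2 : 'I_n2 -> T) (i : 'I_(n1 + n2)) :=
    match split i with inl j => f1 j | inr j => f2 j end.
  exists (n1 + n2)%N, (pick _ c1 c2), (pick _ v1 v2); split.
    by move=> i; rewrite /pick; case: (split i).
  rewrite big_split_ord /pick; congr (_ + _); apply: eq_bigr => i _.
    by rewrite (unsplitK (inl i)).
  by rewrite (unsplitK (inr i)).
- exists n, (fun i => r * c i), v; split => //.
  by rewrite scaler_sumr; apply: eq_bigr => i _; rewrite scalerA.
Qed.

Lemma span_mono (P Q : A -> Prop) x :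
  (forall y, P y -> Q y) -> span P x -> span Q x.
Proof.
move=> PQ; elim=> [| y /PQ | y z _ sy _ sz | r y _ sy];
  [exact: span0 | exact: spanP | exact: spanD | exact: spanZ].
Qed.

Lemma span_idem (P : A -> Prop) x : span (span P) x -> span P x.
Proof.
elim=> [| // | y z _ sy _ sz | r y _ sy];
  [exact: span0 | exact: spanD | exact: spanZ].
Qed.

End Span.

Section AssocAlgebra.
Variables (R : comPzRingType) (A : lmodType R) (mul : A -> A -> A).
Hypothesis mul_assoc_bilin : is_assoc_algebra mul.

(* Additivity of the product makes 0 absorbing on both sides. *)
Lemma mul0l y : mul 0 y = 0.
Proof.
case: mul_assoc_bilin => _ mulDl _ _ _.
by apply: (addrI (mul 0 y)); rewrite -mulDl !addr0.
Qed.

Lemma mul0r y : mul y 0 = 0.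
Proof.
case: mul_assoc_bilin => _ _ mulDr _ _.
by apply: (addrI (mul y 0)); rewrite -mulDr !addr0.
Qed.

Lemma span_mul (P Q PQ : A -> Prop) x y :
  (forall a b, P a -> Q b -> PQ (mul a b)) -> span P x -> span Q y ->
  span PQ (mul x y).
Proof.
case: mul_assoc_bilin => _ mulDl mulDr mulZl mulZr HPQ sx sy.
elim: sx => [| a Pa | ? ? _ ? _ ? | ? ? _ ?];
  rewrite ?mul0l ?mulDl ?mulZl; [exact: span0 | | exact: spanD | exact: spanZ].
elim: sy => [| b Qb | ? ? _ ? _ ? | ? ? _ ?];
  rewrite ?mul0r ?mulDr ?mulZr; [exact: span0 | | exact: spanD | exact: spanZ].
exact/spanP/HPQ.
Qed.

Lemma wprod_cat x s1 y s2 :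
  wprod mul x (s1 ++ y :: s2) = mul (wprod mul x s1) (wprod mul y s2).
Proof.
case: mul_assoc_bilin => massoc _ _ _ _.
have foldl_mul a b t : foldl mul (mul a b) t = mul a (foldl mul b t).
  by elim: t a b => [// | c t IH] a b /=; rewrite -massoc IH.
by rewrite /wprod foldl_cat /= foldl_mul.
Qed.

Definition height_span (S : seq A) (k : nat) : A -> Prop :=
  span (shirshov_word mul S k).

Lemma height_span_mono (S S' : seq A) k k' x :
  {subset S <= S'} -> (k <= k')%N -> height_span S k x -> height_span S' k' x.
Proof.
move=> sSS' lekk'; apply: span_mono => _ [a [l [rest [aS restS sz ->]]]].
exists a, l, rest; split=> //; first exact: sSS'.
  by apply/allP => p /(allP restS); apply: sSS'.
exact: leq_trans lekk'.
Qed.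

Lemma height_span_le (S : seq A) k k' x :
  (k <= k')%N -> height_span S k x -> height_span S k' x.
Proof. by apply: height_span_mono. Qed.

Lemma height_span_mul (S : seq A) k1 k2 x y :
  height_span S k1 x -> height_span S k2 y -> height_span S (k1 + k2) (mul x y).
Proof.
apply: span_mul => _ _ [a [l [r1 [aS r1S sz1 ->]]]] [b [m [r2 [bS r2S sz2 ->]]]].
exists a, l, (r1 ++ (b, m) :: r2); split => //.
- by rewrite all_cat /= bS r1S r2S.
- by move: sz1 sz2; rewrite size_cat /=; lia.
- by rewrite map_cat /= wprod_cat.
Qed.

Lemma height_span_letter (S : seq A) a : a \in S -> height_span S 1 a.
Proof. by move=> aS; apply: spanP; exists a, 0%N, [::]. Qed.

End AssocAlgebra.

Section PrefixDegrees.
Variables (gT : finGroupType) (T : Type).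

Definition deg (w : seq (gT * T)) : gT :=
  foldr (fun p g => (p.1 * g)%g) 1%g w.

Lemma deg_cat w1 w2 : deg (w1 ++ w2) = (deg w1 * deg w2)%g.
Proof. by elim: w1 => [| p w1 IH] /=; rewrite ?mul1g // IH mulgA. Qed.

Definition prefix_degs_in (X : {set gT}) (w : seq (gT * T)) : Prop :=
  forall k, (k <= size w)%N -> deg (take k w) \in X.

Lemma split_last_unit_prefix (w : seq (gT * T)) :
  exists w1 w2, [/\ w = w1 ++ w2, deg w1 = 1%g
    & forall k, (0 < k <= size w2)%N -> deg (take k w2) != 1%g].
Proof.
elim/last_ind: w => [| w z [w1 [w2 [-> deg_w1 nonunit_w2]]]].
  by exists [::], [::]; split => // -[].
case: (eqVneq (deg (rcons (w1 ++ w2) z)) 1%g) => deg_wz.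
  by exists (rcons (w1 ++ w2) z), [::]; split => //; [rewrite cats0 | case].
exists w1, (rcons w2 z); split; [by rewrite rcons_cat | exact: deg_w1 |].
move=> k /andP [k_gt0]; rewrite size_rcons leq_eqVlt ltnS => /orP [/eqP -> | lek].
  rewrite -(size_rcons w2 z) take_size.
  by move: deg_wz; rewrite rcons_cat deg_cat deg_w1 mul1g.
by rewrite -cats1 takel_cat //; apply: nonunit_w2; rewrite k_gt0.
Qed.

Lemma prefix_degs_shift (X : {set gT}) w1 y Q :
  deg w1 = 1%g -> prefix_degs_in X (w1 ++ y :: Q) ->
  (forall k, (0 < k <= size (y :: Q))%N -> deg (take k (y :: Q)) != 1%g) ->
  prefix_degs_in (y.1^-1 *: (X :\ 1%g))%g Q.
Proof.
move=> deg_w1 degsX nonunit k lek; rewrite mem_lcoset invgK in_setD1.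
have /= -> := nonunit k.+1; last by rewrite ltnS lek.
have := degsX (size w1 + k.+1)%N.
rewrite size_cat /= takeD take_size_cat // drop_size_cat //= deg_cat deg_w1 mul1g.
by apply; rewrite leq_add2l ltnS.
Qed.

Lemma card_shift (X : {set gT}) g :
  1%g \in X -> #|(g *: (X :\ 1%g))%g| = #|X|.-1.
Proof. by move=> X1; rewrite card_lcoset (cardsD1 1%g X) X1. Qed.

End PrefixDegrees.

Section GradedAlgebra.
Variables (R : comPzRingType) (A : lmodType R) (mul : A -> A -> A).
Hypothesis mul_assoc_bilin : is_assoc_algebra mul.
Variables (gT : finGroupType) (Ag : gT -> A -> Prop).
Hypothesis grading : is_G_grading mul Ag.

Lemma homogeneous_letters (gens : seq A) :
  exists H : seq (gT * A), (forall p, p \in H -> Ag p.1 p.2) /\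
    forall x, x \in gens -> span (fun a => exists2 p, p \in H & a = p.2) x.
Proof.
case: grading => _ decomp _; elim: gens => [| x gens [H [homH spanH]]].
  by exists [::]; split => // x; rewrite in_nil.
have [f [[homf ->] _]] := decomp x.
exists ([seq (g, f g) | g <- enum gT] ++ H); split.
  by move=> p; rewrite mem_cat => /orP [/mapP [g _ ->] | /homH].
move=> y; rewrite inE => /orP [/eqP -> | /spanH].
  apply: (big_ind (span _)); [exact: span0 | exact: spanD |] => g _.
  by apply: spanP; exists (g, f g); rewrite // mem_cat map_f ?mem_enum.
apply: span_mono => _ [p pH ->]; exists p => //.
by rewrite mem_cat pH orbT.
Qed.

Variable H : seq (gT * A).
Hypothesis homH : forall p, p \in H -> Ag p.1 p.2.

Definition word_value (x : gT * A) (s : seq (gT * A)) : A :=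
  wprod mul x.2 (map snd s).

Lemma word_value_cat x s1 y s2 :
  word_value x (s1 ++ y :: s2) = mul (word_value x s1) (word_value y s2).
Proof. by rewrite /word_value map_cat /= (wprod_cat mul_assoc_bilin). Qed.

Lemma word_value_homogeneous x s :
  all (mem H) (x :: s) -> Ag (deg (x :: s)) (word_value x s).
Proof.
case: grading => _ _ mul_hom.
elim/last_ind: s => [| s y IH]; first by rewrite /= andbT /deg /= mulg1 => /homH.
rewrite -cats1 -cat_cons all_cat => /andP [Hs /= /andP [Hy _]].
rewrite deg_cat word_value_cat /= mulg1 mulgA.
by apply: mul_hom; [exact: IH | exact: homH].
Qed.

Variables (S0 : seq A) (h : nat).
Hypothesis S0_base : shirshov_base mul (Ag 1%g) S0 h.

Definition graded_base : seq A := S0 ++ map snd H.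

Lemma neutral_height x : Ag 1%g x -> height_span mul graded_base h x.
Proof.
move=> x1; case: S0_base => _ /(_ x) [/(_ x1) /lin_span_span spanx _].
by apply: height_span_mono spanx => // a aS0; rewrite mem_cat aS0.
Qed.

Lemma letter_height p : p \in H -> height_span mul graded_base 1 p.2.
Proof. by move=> pH; apply: height_span_letter; rewrite mem_cat map_f ?orbT. Qed.

Lemma prefix_degs_height n (X : {set gT}) x s :
  all (mem H) (x :: s) -> prefix_degs_in X (x :: s) -> (#|X| <= n)%N ->
  height_span mul graded_base (n * h.+1).-1 (word_value x s).
Proof.
elim: n X x s => [| n IH] X x s wH degsX cardX.
  have := degsX 0%N isT; rewrite take0.
  by move: cardX; rewrite leqn0 => /eqP /cards0_eq ->; rewrite inE.
have [w1 [w2 [Ew deg_w1 nonunit]]] := split_last_unit_prefix (x :: s).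
case: w2 Ew nonunit => [| y Q] Ew nonunit.
  rewrite cats0 in Ew; apply: (height_span_le (k := h)); first lia.
  by apply: neutral_height; rewrite -deg_w1 -Ew; apply: word_value_homogeneous.
rewrite Ew all_cat /= in wH degsX; case/and3P: wH => w1H yH QH.
have degsQ := prefix_degs_shift deg_w1 degsX nonunit.
have X1 : 1%g \in X by have := degsX 0%N isT; rewrite take0.
have cardQ : (#|(y.1^-1 *: (X :\ 1%g))%g| <= n)%N.
  by rewrite card_shift //; move: cardX; lia.
have n_gt0 : (0 < n)%N.
  apply: leq_trans cardQ; apply/card_gt0P; exists 1%g.
  by have := degsQ 0%N isT; rewrite take0.
clear degsX nonunit.
have yQ_height : height_span mul graded_base (n * h.+1) (word_value y Q).
  case: Q => [| q Q'] in QH degsQ Ew *.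
    by apply: (height_span_le (k := 1)); [lia | exact: letter_height].
  rewrite -[q :: Q']/([::] ++ q :: Q') word_value_cat.
  apply: (height_span_le (k := (1 + (n * h.+1).-1))); first lia.
  apply: (height_span_mul mul_assoc_bilin _ (IH _ _ _ QH degsQ cardQ)).
  exact: letter_height yH.
case: w1 Ew deg_w1 w1H => [| a s1] Ew deg_w1 w1H.
  by case: Ew => -> ->; apply: height_span_le yQ_height; lia.
case: Ew => -> ->; rewrite word_value_cat.
apply: (height_span_le (k := (h + n * h.+1))); first lia.
apply: (height_span_mul mul_assoc_bilin _ yQ_height); apply: neutral_height.
by rewrite -deg_w1; apply: word_value_homogeneous.
Qed.

Lemma homogeneous_word_height x s : all (mem H) (x :: s) ->
  height_span mul graded_base (#|gT| * h.+1).-1 (word_value x s).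
Proof.
by move=> wH; apply: (prefix_degs_height (X := setT)) => //; rewrite cardsT.
Qed.

Lemma generator_words_height (gens : seq A) :
  (forall x, x \in gens -> span (fun a => exists2 p, p \in H & a = p.2) x) ->
  forall x0 s, x0 \in gens -> all (mem gens) s ->
  height_span mul graded_base (#|gT| * h.+1).-1 (wprod mul x0 s).
Proof.
move=> spanH x0 s x0gens sgens.
pose letter_word a := exists x s', all (mem H) (x :: s') /\ a = word_value x s'.
apply/span_idem/(span_mono (P := letter_word)).
  by move=> _ [x [s' [wH ->]]]; apply: homogeneous_word_height.
elim/last_ind: s sgens => [| s y IH].
  move=> _; apply: span_mono (spanH _ x0gens) => _ [p pH ->].
  by exists p, [::]; rewrite /= pH.
rewrite all_rcons => /andP [ygens sgens].
rewrite /wprod foldl_rcons.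
apply: (span_mul mul_assoc_bilin _ (IH sgens) (spanH _ ygens)).
move=> _ _ [x [s' [wH ->]]] [p pH ->]; exists x, (rcons s' p); split.
  by rewrite -cats1 -cat_cons all_cat wH /= pH.
by rewrite -cats1 word_value_cat.
Qed.

End GradedAlgebra.

Theorem theorem2 (R : comPzRingType) (A : lmodType R) (mul : A -> A -> A)
  (gT : finGroupType) (Ag : gT -> A -> Prop) (h : nat) :
  is_assoc_algebra mul ->
  fin_gen_algebra mul ->
  is_G_grading mul Ag ->
  (exists S : seq A, shirshov_base mul (Ag 1%g) S h) ->
  exists (S : seq A) (h' : nat),
    (h' < (h + 1) * #|gT|)%N /\ shirshov_base mul (fun _ => True) S h'.
Proof.
move=> assoc [gens gen_span] grading [S0 S0_base].
have [H [homH spanH]] := homogeneous_letters grading gens.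
exists (graded_base H S0), (#|gT| * h.+1).-1; split.
  have gT_gt0 : (0 < #|gT|)%N by apply/card_gt0P; exists 1%g.
  by rewrite addn1 [X in (_ < X)%N]mulnC ltn_predL muln_gt0 gT_gt0.
split=> // x; split=> // _; apply/span_lin_span/span_idem.
apply: span_mono (lin_span_span (gen_span x)) => _ [x0 [s [x0gens [sgens ->]]]].
exact: (generator_words_height assoc grading homH S0_base spanH x0gens sgens).
Qed.
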